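(* Let $q\ge 2$ and $n\ge 1$ be integers, and let $[q]=\{0,1,\dots,q-1\}$. For every nonempty set $S\subseteq [q]^n$ one has $$|\Delta(S)|\ \ge\ \frac{\log |S|}{2\log(2nq)}.$$
   Context: For $x=(x_1,\dots,x_n),y=(y_1,\dots,y_n)\in[q]^n$, the Hamming distance is $d_H(x,y)=\#\{i: x_i\neq y_i\}$. For a set $S$, $\Delta(S)=\{d_H(x,y): x,y\in S\}$ is the set of Hamming distances determined by $S$ (pairs with $x=y$ allowed, so $0\in\Delta(S)$). Logarithms are to any fixed base greater than 1 (the bound is a ratio of logarithms). *)

From mathcomp Require Import all_boot all_order all_algebra.
From mathcomp Require Import all_classical all_reals all_analysis.
Set Implicit Arguments. Unset Strict Implicit. Unset Printing Implicit Defensive.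

Definition word (q n : nat) := {ffun 'I_n -> 'I_q}.

Definition hamming (q n : nat) (x y : word q n) : nat :=
  #|[set i : 'I_n | x i != y i]|.

(* Delta(S) = { d_H(x,y) : x, y in S } as a set of naturals (given as a seq,
   its cardinality is size of the undup'd list). *)
Definition dist_set (q n : nat) (S : {set word q n}) : seq nat :=
  undup [seq hamming x y | x <- enum S, y <- enum S].

From mathcomp Require Import all_boot all_order all_algebra.
From mathcomp Require Import all_classical all_reals all_analysis.
From mathcomp Require Import zify.
Set Implicit Arguments. Unset Strict Implicit. Unset Printing Implicit Defensive.
Import Order.TTheory GRing.Theory Num.Theory.
Local Open Scope ring_scope.

(* Polynomial method.  With D the nonzero distances of S, put
   F_x(z) = prod_(t in D) (t - d_H(x,z)).  For x, y in S, F_x(y) vanishes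
   iff x <> y, so the F_x are linearly independent.  As
   d_H(x,z) = n - sum_j [z_j = x_j] is affine in the indicators [z_j = a],
   every F_x is a combination of products of |D| factors, each an indicator
   or 1; these span a space of dimension at most (nq+1)^|D|.  Hence
   |S| <= (nq+1)^(|Delta(S)|-1), and taking logarithms gives the bound. *)

Lemma sum_option (R : nmodType) (I : finType) (F : option I -> R) :
  \sum_o F o = F None + \sum_i F (Some i).
Proof.
rewrite (bigD1 None) // (reindex_omap Some id) => [|[]] //=.
by under eq_bigl do rewrite eqxx.
Qed.

Section DiagonalFamily.
Variables (K : fieldType) (T : finType).
Local Notation V := {ffun T -> K^o}.

Lemma card_le_dimv_diagonal (S : {set T}) (F : T -> V) (U : {vspace V}) :
  {in S, forall x, F x \in U} ->
  {in S &, forall x y, (F x y == 0) = (x != y)} ->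
  (#|S| <= \dim U)%N.
Proof.
move=> FU Fdiag; have [-> | [x0 _]] := set_0Vmem S; first by rewrite cards0.
set s := enum S; set X := map F s.
have s_S i : (i < size s)%N -> nth x0 s i \in S by move=> lt_is; rewrite -mem_enum mem_nth.
have freeX : free X.
  apply/(@freeP _ _ _ (in_tuple X)) => c sum_c0 i.
  have lt_is : (i < size s)%N by rewrite -(size_map F) ltn_ord.
  have /ffunP/(_ (nth x0 s i)) := sum_c0.
  rewrite sum_ffunE ffunE (bigD1 i) //= big1 => [|j ne_ji].
    rewrite addr0 ffunE (nth_map x0) // -[_ *: _]/(_ * _) => /eqP.
    by rewrite mulf_eq0 Fdiag ?s_S // eqxx orbF => /eqP.
  have lt_js : (j < size s)%N by rewrite -(size_map F) ltn_ord.
  rewrite ffunE (nth_map x0) // -[_ *: _]/(_ * _); apply/eqP.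
  by rewrite mulf_eq0 Fdiag ?s_S // nth_uniq ?enum_uniq // ne_ji orbT.
have /dimvS : (<<X>> <= U)%VS.
  by apply/span_subvP => _ /mapP [x xS ->]; apply: FU; rewrite -mem_enum.
by rewrite (eqnP freeX) size_map -cardE.
Qed.

End DiagonalFamily.

Section Hamming.
Variables q n : nat.
Implicit Types x y z : word q n.

Lemma hamming_eq0 x y : (hamming x y == 0%N) = (x == y).
Proof.
rewrite /hamming cards_eq0; apply/eqP/eqP => [xy | ->].
  by apply/ffunP => i; apply/eqP; move/setP/(_ i): xy; rewrite !inE => /negbFE.
by apply/setP => i; rewrite !inE eqxx.
Qed.

Lemma hamming_in_dist_set (S : {set word q n}) x y :
  x \in S -> y \in S -> hamming x y \in dist_set S.
Proof. by move=> xS yS; rewrite mem_undup; apply: allpairs_f; rewrite mem_enum. Qed.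

Lemma natr_hamming (R : pzRingType) x z :
  (hamming x z)%:R = n%:R - \sum_j ((z j == x j)%:R : R).
Proof.
rewrite /hamming -sum1_card big_mkcond /= natr_sum.
rewrite -[n in n%:R]card_ord -sum1_card natr_sum -sumrB.
by apply: eq_bigr => j _; rewrite inE eq_sym; case: (z j == x j); rewrite ?subrr ?subr0.
Qed.

End Hamming.

Section HammingPolynomials.
Variables (K : numFieldType) (q n : nat).
Implicit Types x z : word q n.
Local Notation V := {ffun word q n -> K^o}.

(* [Some (j, a)] is the indicator of [z_j = a]; [None] is the constant 1, so
   monomials of length k include all products of at most k indicators. *)
Definition literal (o : option ('I_n * 'I_q)) : V :=
  [ffun z => if o is Some (j, a) then ((z : word q n) j == a)%:R else 1].

Definition monomial {k} (f : {ffun 'I_k -> option ('I_n * 'I_q)}) : V :=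
  [ffun z => \prod_i literal (f i) z].

Definition monomial_space k : {vspace V} := <<codom (@monomial k)>>%VS.

Lemma dim_monomial_space k : (\dim (monomial_space k) <= (n * q).+1 ^ k)%N.
Proof.
apply: leq_trans (dim_span _) _.
by rewrite size_codom card_ffun card_option card_prod !card_ord.
Qed.

Definition dist_weight x (t : nat) (o : option ('I_n * 'I_q)) : K :=
  if o is Some (j, a) then (a == x j)%:R else t%:R - n%:R.

Lemma natr_sub_hamming_literals x z t :
  t%:R - (hamming x z)%:R = \sum_o dist_weight x t o * literal o z.
Proof.
rewrite sum_option ffunE mulr1 natr_hamming opprD opprK addrA; congr (_ + _).
transitivity (\sum_j \sum_a dist_weight x t (Some (j, a)) * literal (Some (j, a)) z).
  apply: eq_bigr => j _; rewrite (bigD1 (x j)) //= eqxx mul1r ffunE big1 ?addr0 // => a.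
  by move/negbTE => ->; rewrite mul0r.
by rewrite pair_bigA; apply: eq_bigr => -[].
Qed.

Definition hamming_poly (D : seq nat) x : V :=
  [ffun z => \prod_(t <- D) (t%:R - (hamming x z)%:R)].

Lemma hamming_poly_eq0 D x z : (hamming_poly D x z == 0) = (hamming x z \in D).
Proof.
rewrite ffunE prodf_seq_eq0; apply/hasP/idP => [[t tD /=] | zD].
  by rewrite subr_eq0 eqr_nat => /eqP <-.
by exists (hamming x z); rewrite //= subrr.
Qed.

Lemma hamming_poly_in_monomial_space D x :
  hamming_poly D x \in monomial_space (size D).
Proof.
have -> : hamming_poly D x = \sum_(f : {ffun 'I_(size D) -> _})
    (\prod_(i < size D) dist_weight x (nth 0%N D i) (f i)) *: monomial f.
  apply/ffunP => z; rewrite !ffunE sum_ffunE (big_nth 0%N) big_mkord.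
  under eq_bigr => i _ do rewrite natr_sub_hamming_literals.
  rewrite bigA_distr_bigA; apply: eq_bigr => f _.
  by rewrite ffunE -[_ *: _]/(_ * _) ffunE -big_split.
by apply: rpred_sum => f _; apply/rpredZ/memv_span/codom_f.
Qed.

End HammingPolynomials.

Lemma card_le_pow_dist_set q n (S : {set word q n}) :
  (#|S| <= (n * q).+1 ^ (size (dist_set S)).-1)%N.
Proof.
have [-> | [x xS]] := set_0Vmem S; first by rewrite cards0.
set D := [seq t <- dist_set S | t != 0%N].
have sizeD : size D = (size (dist_set S)).-1.
  have zero_dist : 0%N \in dist_set S.
    by rewrite -(eqP (_ : hamming x x == 0%N)) ?hamming_in_dist_set ?hamming_eq0.
  by rewrite size_filter -(count_predC (pred1 0%N)) count_uniq_mem ?undup_uniq // zero_dist.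
rewrite -sizeD; apply: leq_trans (@dim_monomial_space rat q n (size D)).
apply: (card_le_dimv_diagonal (F := @hamming_poly rat q n D)) => [y _ | y z yS zS].
  exact: hamming_poly_in_monomial_space.
by rewrite hamming_poly_eq0 mem_filter hamming_in_dist_set // andbT hamming_eq0.
Qed.

Theorem theorem1p2 (R : realType) (q n : nat) (hq : (2 <= q)%N) (hn : (1 <= n)%N)
  (S : {set word q n}) (hS : (0 < #|S|)%N) :
  ln (#|S|%:R : R) / (2 * ln ((2 * n * q)%:R : R)) <= (size (dist_set S))%:R.
Proof.
set d := size (dist_set S).
have ln_2nq_gt0 : 0 < ln ((2 * n * q)%:R : R) by apply: ln_gt0; rewrite ltr1n; lia.
have ln_card : ln (#|S|%:R : R) <= d.-1%:R * ln ((n * q).+1%:R).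
  rewrite mulr_natl -lnXn ?ltr0n // -natrX ler_ln ?posrE ?ltr0n ?expn_gt0 //.
  by rewrite ler_nat card_le_pow_dist_set.
rewrite ler_pdivrMr ?mulr_gt0 //; apply: (le_trans ln_card).
apply: ler_pM; rewrite ?ler_nat ?leq_pred ?ln_ge0 ?ler1n //.
apply: le_trans (ler_peMl (ltW ln_2nq_gt0) (ler1n _ 2)).
by rewrite ler_ln ?posrE ?ltr0n ?ler_nat; lia.
Qed.
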